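(* (Generalized Pigeonhole Principle.) Let $n\geq 1$, $r\geq 0$ and $s$ be integers with $0\leq s<n$. If $rn+s$ or more objects are placed in $n$ boxes, then for each integer $m$ with $1\leq m\leq n$ there exist $m$ boxes which together contain at least $rm+\min(s,m)$ objects. *)

From mathcomp Require Import all_boot.

(* Among the m-sets of boxes choose one, B, with the most objects.  If every
   box of B holds more than r objects, B holds at least (r+1)m objects.
   Otherwise some box of B holds at most r objects, and by maximality (swap it
   with an outside box) so does every box outside B; the n - m outside boxes
   then hold at most r(n - m) objects, leaving at least rm + s for B. *)

From mathcomp Require Import all_boot.
From mathcomp Require Import zify.

Set Implicit Arguments.
Unset Strict Implicit.
Unset Printing Implicit Defensive.

Section HeaviestSubset.

Variables (T : finType) (c : T -> nat).

Lemma exists_set_card (m : nat) : m <= #|T| -> exists B : {set T}, #|B| = m.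
Proof.
move=> le_mT; exists [set x in take m (enum T)].
rewrite cardsE (card_uniqP _) ?take_uniq ?enum_uniq // size_take -cardE.
by case: ltngtP le_mT => // ->.
Qed.

Definition heaviest (m : nat) (B : {set T}) :=
  #|B| = m /\ forall B' : {set T}, #|B'| = m ->
    \sum_(i in B') c i <= \sum_(i in B) c i.

Lemma exists_heaviest (m : nat) : m <= #|T| -> exists B, heaviest m B.
Proof.
case/exists_set_card=> B0 cardB0.
have cardB0_m : #|B0| == m by apply/eqP.
case: (@arg_maxnP _ B0 (fun B : {set T} => #|B| == m)
  (fun B : {set T} => \sum_(i in B) c i) cardB0_m) => B /eqP cardB maxB.
by exists B; split=> // B' /eqP /maxB.
Qed.

Lemma heaviest_exchange (m : nat) (B : {set T}) (x y : T) :
  heaviest m B -> x \in B -> y \notin B -> c y <= c x.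
Proof.
move=> [cardB maxB] xB yB.
have yBx : y \notin B :\ x by rewrite in_setD1 (negbTE yB) andbF.
have card_swap : #|y |: (B :\ x)| = m.
  by rewrite cardsU1 yBx -cardB (cardsD1 x B) xB.
have := maxB _ card_swap.
rewrite big_setU1 //= (big_setD1 x xB) /=.
lia.
Qed.

Lemma sum_setC_le (r : nat) (B : {set T}) :
  (forall i, i \notin B -> c i <= r) ->
  \sum_i c i <= \sum_(i in B) c i + r * (#|T| - #|B|).
Proof.
move=> small_out.
rewrite (bigID (mem B)) /= leq_add2l -(cardsC B) addKn mulnC -sum_nat_const.
rewrite [leqRHS](eq_bigl (fun i => i \notin B)) => [|i]; last by rewrite inE.
exact: leq_sum.
Qed.

Lemma heaviest_sum_ge (r m : nat) (B : {set T}) : heaviest m B ->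
  (r.+1 * m <= \sum_(i in B) c i) \/
  (\sum_i c i <= \sum_(i in B) c i + r * (#|T| - m)).
Proof.
move=> heavyB; have cardB := heavyB.1.
have [/exists_inP [x xB cx] | all_big] := boolP [exists x in B, c x <= r].
- right; rewrite -cardB; apply: sum_setC_le => y yB.
  exact: leq_trans (heaviest_exchange heavyB xB yB) cx.
- left; rewrite -cardB mulnC -sum_nat_const; apply: leq_sum => i iB.
  by move: all_big; rewrite negb_exists_in => /forall_inP /(_ i iB); rewrite ltnNge.
Qed.

End HeaviestSubset.

Theorem theorem2 (n r s : nat) (c : 'I_n -> nat) :
  1 <= n -> s < n ->
  r * n + s <= \sum_(i < n) c i ->
  forall m : nat, 1 <= m <= n ->
  exists B : {set 'I_n}, #|B| = m /\ r * m + minn s m <= \sum_(i in B) c i.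
Proof.
move=> _ _ total m /andP [_ le_mn].
have [B heavyB] : exists B, heaviest c m B by apply: exists_heaviest; rewrite card_ord.
exists B; split; first exact: heavyB.1.
have split_rn : r * n = r * m + r * (n - m) by rewrite -mulnDr subnKC.
(* The lemma's sums carry a different (convertible) finType instance, which
   [lia] would treat as distinct atoms; folding them makes them syntactic. *)
set S := \sum_(i in B) c i; set total_c := \sum_(i < n) c i in total.
case: (heaviest_sum_ge r heavyB); rewrite -/S -/total_c ?mulSn ?card_ord; lia.
Qed.
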